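(* Let $\Lambda$ be a closed convex subset of $[0,\infty)$ containing $0$, and let $(G,\ell)$ be a group with an invariant $\Lambda$-valued norm. Then $(G,\ell)$ is metrically LE$\mathcal C_1$, where $\mathcal C_1$ is the class of finite groups with invariant $\Lambda$-valued pseudo-norms, if and only if it is metrically LE$\mathcal C_2$, where $\mathcal C_2$ is the class of finite groups with invariant $\Lambda$-valued norms. The same equivalence holds with the word ''invariant'' omitted throughout.
   Context: A pseudo-norm on $G$ is $\ell:G\to\Lambda$ with $\ell(1)=0$, $\ell(g)=\ell(g^{-1})$, $\ell(gh)\le\ell(g)+\ell(h)$; a norm if $\ell(g)=0\Rightarrow g=1$; invariant if $\ell(h^{-1}gh)=\ell(g)$. For pseudo-normed groups $(G_1,\ell_1),(G_2,\ell_2)$, finite $D\subseteq G_1$ and finite $Q\subseteq\Lambda\cap\mathbb Q$ with $0\in Q$, a map $\varphi:G_1\to G_2$ is a $D$-$Q$-almost-homomorphism if it is injective on $D$, $\varphi(hg)=\varphi(h)\varphi(g)$ whenever $h,g,hg\in D$, and $\ell_1(g)\,\square\,q\iff\ell_2(\varphi(g))\,\square\,q$ for all $g\in D$, $q\in Q$, $\square\in\{<,>,=\}$. For a class $\mathcal C$ of pseudo-normed groups, $(G,\ell)$ is metrically LE$\mathcal C$ if for every finite $D\subseteq G$ and finite $Q\subseteq\Lambda\cap\mathbb Q$ with $0\in Q$ there are $(C,\ell_C)\in\mathcal C$ and a $D$-$Q$-almost-homomorphism $(G,\ell)\to(C,\ell_C)$. *)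

From HB Require Import structures.
From mathcomp Require Import all_boot all_order all_algebra all_fingroup.
From mathcomp Require Import all_classical all_reals all_analysis.

Set Implicit Arguments.
Unset Strict Implicit.
Unset Printing Implicit Defensive.

Import Order.TTheory GRing.Theory Num.Theory.
Local Open Scope ring_scope.
Local Open Scope classical_set_scope.

Definition convex_subset (R : realType) (L : set R) : Prop :=
  forall x y t : R, L x -> L y -> 0 <= t -> t <= 1 ->
    L (t * x + (1 - t) * y).

Definition pseudo_norm (R : realType) (L : set R) (G : groupType)
    (l : G -> R) : Prop :=
  [/\ forall g, L (l g),
      l 1%g = 0,
      forall g, l (g^-1)%g = l g
    & forall g h, l (g * h)%g <= l g + l h].

Definition is_norm (R : realType) (L : set R) (G : groupType)
    (l : G -> R) : Prop :=
  pseudo_norm L l /\ forall g, l g = 0 -> g = 1%g.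

Definition invariant_fun (R : realType) (G : groupType) (l : G -> R) : Prop :=
  forall g h : G, l (h^-1 * g * h)%g = l g.

Definition almost_hom (R : realType) (G1 G2 : groupType)
    (l1 : G1 -> R) (l2 : G2 -> R) (D : seq G1) (Q : seq rat)
    (phi : G1 -> G2) : Prop :=
  [/\ {in D &, injective phi},
      (forall h g, h \in D -> g \in D -> (h * g)%g \in D ->
         phi (h * g)%g = (phi h * phi g)%g)
    & forall g q, g \in D -> q \in Q ->
        [/\ l1 g < ratr q <-> l2 (phi g) < ratr q,
            l1 g > ratr q <-> l2 (phi g) > ratr q
          & l1 g = ratr q <-> l2 (phi g) = ratr q]].

Definition fin_class (R : realType) :=
  forall C : finGroupType, (C -> R) -> Prop.

(** Metrically locally embeddable into the class [cls]: D ranges over finite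
    subsets of G (given as sequences), Q over finite subsets of Lambda ∩ Q
    containing 0. *)
Definition metrically_LE (R : realType) (L : set R) (cls : fin_class R)
    (G : groupType) (l : G -> R) : Prop :=
  forall (D : seq G) (Q : seq rat),
    0 \in Q -> (forall q, q \in Q -> L (ratr q)) ->
    exists (C : finGroupType) (lC : C -> R),
      cls C lC /\ exists phi : G -> C, almost_hom l lC D Q phi.

Definition C_pseudo (R : realType) (L : set R) : fin_class R :=
  fun C lC => pseudo_norm L lC.
Definition C_norm (R : realType) (L : set R) : fin_class R :=
  fun C lC => is_norm L lC.
Definition C_inv_pseudo (R : realType) (L : set R) : fin_class R :=
  fun C lC => pseudo_norm L lC /\ invariant_fun lC.
Definition C_inv_norm (R : realType) (L : set R) : fin_class R :=
  fun C lC => is_norm L lC /\ invariant_fun lC.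

From HB Require Import structures.
From mathcomp Require Import all_boot all_order all_algebra all_fingroup.
From mathcomp Require Import all_classical all_reals all_analysis.
Import Order.TTheory GRing.Theory Num.Theory.
Import numFieldNormedType.Exports.
Local Open Scope ring_scope.
Local Open Scope classical_set_scope.

Set Implicit Arguments.
Unset Strict Implicit.
Unset Printing Implicit Defensive.

(* A finite pseudo-normed group is turned into a normed one without disturbing
   an almost-homomorphism from a normed group G.  Let m be the least positive
   value of the pseudo-norm and raise every nontrivial value below m to m: the
   result is still a (possibly invariant) Lambda-valued pseudo-norm, it vanishes
   only at 1, and it is unchanged on the image of D, because an element of D of
   pseudo-norm zero in the image has norm zero in G, hence is 1 and maps to 1.
   If the pseudo-norm vanishes identically, D is contained in {1} and the
   trivial group does the job. *)

Lemma exists_min_pos (R : realType) (T : finType) (f : T -> R) (t : T) :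
  0 < f t -> exists2 t0, 0 < f t0 & forall u, 0 < f u -> f t0 <= f u.
Proof.
move=> ft_gt0.
have [t0 ft0_gt0 t0_min] :=
  real_arg_minP (P := fun u => 0 < f u) ft_gt0 (fun u _ => num_real (f u)).
by exists t0 => // u fu_gt0; apply: t0_min.
Qed.

Section LiftNorm.
Variables (R : realType) (L : set R) (G : groupType) (l : G -> R) (m : R).

Definition lift_norm (g : G) : R := if g == 1%g then 0 else Num.max (l g) m.

Lemma lift_norm1 : lift_norm 1%g = 0.
Proof. by rewrite /lift_norm eqxx. Qed.

Lemma lift_norm_ge (g : G) : g != 1%g -> l g <= lift_norm g /\ m <= lift_norm g.
Proof. by rewrite /lift_norm => /negbTE->; rewrite !le_max !lexx orbT. Qed.

Lemma lift_normE (g : G) :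
  l 1%g = 0 -> (g == 1%g) || (m <= l g) -> lift_norm g = l g.
Proof.
rewrite /lift_norm => l1 /orP[/eqP->|m_le]; first by rewrite eqxx l1.
by case: eqP => [->|_]; [rewrite l1 | rewrite max_l].
Qed.

Lemma lift_norm_is_norm : 0 < m -> L m -> pseudo_norm L l -> is_norm L lift_norm.
Proof.
move=> m_gt0 Lm [Ll l1 lV lM].
have lift_ge0 g : 0 <= lift_norm g.
  have [->|g1] := eqVneq g 1%g; first by rewrite lift_norm1.
  by have [_ /(le_trans (ltW m_gt0))] := lift_norm_ge g1.
split; first split.
- move=> g; rewrite /lift_norm; case: eqP => _; first by rewrite -l1.
  by case: (leP (l g) m).
- exact: lift_norm1.
- by move=> g; rewrite /lift_norm invg_eq1 lV.
- move=> g h.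
  have [->|g1] := eqVneq g 1%g; first by rewrite mul1g lift_norm1 add0r.
  have [->|h1] := eqVneq h 1%g; first by rewrite mulg1 lift_norm1 addr0.
  have [lg mg] := lift_norm_ge g1; have [lh _] := lift_norm_ge h1.
  rewrite {1}/lift_norm; case: eqP => _; first by rewrite addr_ge0.
  rewrite ge_max (le_trans (lM g h) (lerD lg lh)) /=.
  by rewrite -[m]addr0 lerD.
- move=> g lg0; have [//|g1] := eqVneq g 1%g.
  by have [_] := lift_norm_ge g1; rewrite lg0 => /(lt_le_trans m_gt0); rewrite ltxx.
Qed.

Lemma lift_norm_invariant : invariant_fun l -> invariant_fun lift_norm.
Proof.
move=> l_inv g h; rewrite /lift_norm l_inv.
by rewrite -mulgA -[(h^-1 * (g * h))%g]/(g ^ h)%g conjg_eq1.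
Qed.

End LiftNorm.

Section AlmostHom.
Variables (R : realType) (G1 G2 : groupType) (l1 : G1 -> R) (l2 : G2 -> R).
Variables (D : seq G1) (Q : seq rat) (phi : G1 -> G2).
Hypothesis phi_almost : almost_hom l1 l2 D Q phi.

Lemma almost_hom_eq0 (g : G1) :
  0 \in Q -> g \in D -> l1 g = 0 <-> l2 (phi g) = 0.
Proof.
case: phi_almost => _ _ cmp Q0 gD.
by have [_ _] := cmp g 0%R gD Q0; rewrite rmorph0.
Qed.

Lemma almost_hom1 : 1%g \in D -> phi 1%g = 1%g.
Proof.
case: phi_almost => _ phiM _ D1.
by apply: (mulgI (phi 1%g)); rewrite -phiM ?mulg1.
Qed.

Lemma almost_hom_congr (l2' : G2 -> R) :
  {in D, forall g, l2' (phi g) = l2 (phi g)} -> almost_hom l1 l2' D Q phi.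
Proof.
case: phi_almost => phi_inj phiM cmp l2'E.
by split=> // g q gD qQ; rewrite l2'E //; apply: cmp.
Qed.

End AlmostHom.

Section NormOfPseudoNorm.
Variables (R : realType) (L : set R) (G : groupType) (l : G -> R).
Hypothesis l_eq0 : forall g, l g = 0 -> g = 1%g.

Lemma almost_hom_trivial (D : seq G) (Q : seq rat) :
  {in D, forall g, l g = 0} ->
  almost_hom l (fun _ : 'I_1 => 0 : R) D Q (fun _ => 1%g).
Proof.
move=> D0; split=> [g h gD hD _|g h _ _ _|g q gD _].
- by rewrite (l_eq0 (D0 g gD)) (l_eq0 (D0 h hD)).
- by rewrite (ord1 (_ * _)%g) (ord1 1%g).
- by rewrite D0.
Qed.

Lemma is_norm_trivial : L 0 -> is_norm L (fun _ : 'I_1 => 0 : R).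
Proof.
move=> L0; split; first by split=> // *; rewrite addr0.
by move=> g _; rewrite ord1; apply/val_inj.
Qed.

Lemma almost_hom_norm (C : finGroupType) (lC : C -> R) (D : seq G)
    (Q : seq rat) (phi : G -> C) :
  L `<=` [set x | 0 <= x] -> 0 \in Q -> pseudo_norm L lC ->
  almost_hom l lC D Q phi ->
  exists (C' : finGroupType) (l' : C' -> R),
    [/\ is_norm L l', invariant_fun lC -> invariant_fun l'
      & exists phi' : G -> C', almost_hom l l' D Q phi'].
Proof.
move=> Lpos Q0 lC_pseudo phi_almost.
have [LlC lC1 _ _] := lC_pseudo.
have lC_ge0 c : 0 <= lC c by apply: Lpos.
have [[c lCc_gt0]|no_pos] := pselect (exists c, 0 < lC c).
  have [c0 m_gt0 m_min] := exists_min_pos lCc_gt0.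
  exists C, (lift_norm lC (lC c0)); split.
  - exact: lift_norm_is_norm.
  - exact: lift_norm_invariant.
  exists phi; apply: (almost_hom_congr phi_almost) => g gD.
  apply: lift_normE => //; have [lCg0|lCg_neq0] := eqVneq (lC (phi g)) 0.
    move/(almost_hom_eq0 phi_almost Q0 gD)/l_eq0: lCg0 => g1.
    by move: gD; rewrite g1 => D1; rewrite (almost_hom1 phi_almost D1) eqxx.
  by rewrite m_min ?orbT // lt0r lCg_neq0 lC_ge0.
have lC0 c : lC c = 0.
  apply/eqP; rewrite eq_le lC_ge0 andbT leNgt.
  by apply/negP => lCc_gt0; apply: no_pos; exists c.
exists ('I_1 : finGroupType), (fun _ => 0); split.
- by apply: is_norm_trivial; rewrite -lC1.
- by [].
exists (fun _ => 1%g); apply: almost_hom_trivial => g gD.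
exact/(almost_hom_eq0 phi_almost Q0 gD).
Qed.

End NormOfPseudoNorm.

Lemma metrically_LE_replace (R : realType) (L : set R) (cls1 cls2 : fin_class R)
    (G : groupType) (l : G -> R) :
  (forall (C : finGroupType) (lC : C -> R) D Q (phi : G -> C),
     0 \in Q -> cls1 C lC -> almost_hom l lC D Q phi ->
     exists (C' : finGroupType) (l' : C' -> R),
       cls2 C' l' /\ exists phi' : G -> C', almost_hom l l' D Q phi') ->
  metrically_LE L cls1 l -> metrically_LE L cls2 l.
Proof.
move=> replace le1 D Q Q0 QL.
have [C [lC [cls1C [phi phi_almost]]]] := le1 D Q Q0 QL.
exact: replace phi_almost.
Qed.

Lemma metrically_LE_sub (R : realType) (L : set R) (cls1 cls2 : fin_class R)
    (G : groupType) (l : G -> R) :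
  (forall (C : finGroupType) (lC : C -> R), cls1 C lC -> cls2 C lC) ->
  metrically_LE L cls1 l -> metrically_LE L cls2 l.
Proof.
move=> sub; apply: metrically_LE_replace => C lC D Q phi _ /sub cls2C phi_almost.
by exists C, lC; split=> //; exists phi.
Qed.

Theorem proposition2p6 (R : realType) (L : set R) :
  closed L -> convex_subset L -> L `<=` [set x | 0 <= x] -> L 0 ->
  (forall (G : groupType) (l : G -> R), is_norm L l -> invariant_fun l ->
     metrically_LE L (C_inv_pseudo L) l <-> metrically_LE L (C_inv_norm L) l)
  /\
  (forall (G : groupType) (l : G -> R), is_norm L l ->
     metrically_LE L (C_pseudo L) l <-> metrically_LE L (C_norm L) l).
Proof.
move=> _ _ Lpos _; split=> [G l [_ l_eq0] _|G l [_ l_eq0]]; split.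
- apply: metrically_LE_replace => C lC D Q phi Q0 [lC_pseudo lC_inv] phi_almost.
  have [C' [l' [l'_norm l'_inv phi'_almost]]] :=
    almost_hom_norm l_eq0 Lpos Q0 lC_pseudo phi_almost.
  by exists C', l'; split=> //; split=> //; apply: l'_inv.
- by apply: metrically_LE_sub => C lC [[]].
- apply: metrically_LE_replace => C lC D Q phi Q0 lC_pseudo phi_almost.
  have [C' [l' [l'_norm _ phi'_almost]]] :=
    almost_hom_norm l_eq0 Lpos Q0 lC_pseudo phi_almost.
  by exists C', l'.
- by apply: metrically_LE_sub => C lC [].
Qed.
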